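(* Let $k\ge2$ and let \[ A_\epsilon+\lambda E_\epsilon=\begin{bmatrix}\lambda E_{1,1} & A_{1,2} & & \\ & \ddots & \ddots & \\ & & \lambda E_{k-1,k-1} & A_{k-1,k}\end{bmatrix} \] be a bidiagonal pencil with $k-1$ block rows of sizes $s_1,\dots,s_{k-1}$ and $k$ block columns of sizes $t_1,\dots,t_k$, where $t_{i+1}=s_i$ for $i=1,\dots,k-1$, all unmarked blocks are zero, and \[ A_{i,i+1}\in\mathbb{C}^{s_i\times s_i},\qquad E_{i,i}=\begin{bmatrix}0&\hat E_{i,i}\end{bmatrix}\in\mathbb{C}^{s_i\times t_i},\qquad \hat E_{i,i}\in\mathbb{C}^{s_i\times s_i}, \] with both $A_{i,i+1}$ and $\hat E_{i,i}$ invertible and upper triangular. Let $n=\sum_{i=1}^k t_i$, let $r$ be the normal rank of the pencil, and put \[ Z_i=\begin{bmatrix}0&-A_{i,i+1}^{-1}\hat E_{i,i}\end{bmatrix}\in\mathbb{C}^{s_i\times t_i},\qquad N(\lambda):=\begin{bmatrix}I_{t_1}\\ Z_1\lambda\\ \vdots\\ Z_{k-1}\cdots Z_1\lambda^{k-1}\end{bmatrix}\in\mathbb{C}[\lambda]^{n\times(n-r)}. \] Then the columns of $N(\lambda)$ form a minimal polynomial basis for the right null space of $A_\epsilon+\lambda E_\epsilon$.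
   Context: The normal rank is the rank over $\mathbb{C}(\lambda)$. The right null space of a pencil $P(\lambda)$ is $\{x\in\mathbb{C}(\lambda)^n: P(\lambda)x(\lambda)=0\}$. A minimal polynomial basis of it is a polynomial matrix whose columns form a basis of this $\mathbb{C}(\lambda)$-space and whose sum of column degrees is minimal among all polynomial bases. *)

From HB Require Import structures.
From mathcomp Require Import all_boot all_order all_algebra.
From mathcomp Require Import complex.
From mathcomp Require Import reals.
Set Implicit Arguments. Unset Strict Implicit. Unset Printing Implicit Defensive.
Import Order.TTheory GRing.Theory Num.Theory.
Local Open Scope ring_scope.

(* entry of a matrix addressed by natural-number indices (0 outside the range) *)
Definition mxn (T : zmodType) (m n : nat) (M : 'M[T]_(m, n)) (a b : nat) : T :=
  match insub a, insub b with
  | Some i, Some j => M i j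
  | _, _ => 0
  end.

Definition toF (C : idomainType) (m n : nat) (P : 'M[{poly C}]_(m, n)) :
  'M[{fraction {poly C}}]_(m, n) := map_mx (@tofrac _) P.

Definition normal_rank (C : idomainType) (m n : nat) (P : 'M[{poly C}]_(m, n)) : nat :=
  \rank (toF P).

Definition rnull_basis (F : fieldType) (m n d : nat) (P : 'M[F]_(m, n)) (B : 'M[F]_(n, d)) : Prop :=
  [/\ P *m B = 0,
      \rank B = d &
      forall x : 'cV[F]_n, P *m x = 0 -> exists c : 'cV[F]_d, x = B *m c].

Definition poly_rnull_basis (C : idomainType) (m n d : nat)
  (P : 'M[{poly C}]_(m, n)) (B : 'M[{poly C}]_(n, d)) : Prop :=
  rnull_basis (toF P) (toF B).

Definition coldeg_sum (C : idomainType) (n d : nat) (B : 'M[{poly C}]_(n, d)) : nat :=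
  (\sum_(j < d) \max_(i < n) (size (B i j)).-1)%N.

Definition min_poly_basis (C : idomainType) (m n d : nat)
  (P : 'M[{poly C}]_(m, n)) (B : 'M[{poly C}]_(n, d)) : Prop :=
  poly_rnull_basis P B /\
  forall (d' : nat) (B' : 'M[{poly C}]_(n, d')),
    poly_rnull_basis P B' -> (coldeg_sum B <= coldeg_sum B')%N.

Definition upper_triangular (C : zmodType) (m : nat) (M : 'M[C]_m) : Prop :=
  forall i j : 'I_m, (j < i)%N -> M i j = 0.

(* ---------- the bidiagonal pencil (0-based block indices) ----------
   Column blocks j = 0..k-1 have sizes t j (paper: t_{j+1}).
   Row blocks i = 0..k-2 have sizes s_i = t (i+1).
   Row block i contains lambda E_{i,i} in column block i and A_{i,i+1}
   in column block i+1, with E_{i,i} = [0 Ehat i]. *)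

Section Pencil.
Variable C : fieldType.
Variables (k : nat) (t : nat -> nat).
Variables (A Ehat : forall i : nat, 'M[C]_(t i.+1)).

Definition coff (j : nat) : nat := (\sum_(j' < j) t j')%N.
Definition ncols : nat := coff k.
Definition roff (i : nat) : nat := (\sum_(i' < i) t i'.+1)%N.
Definition nrows : nat := roff k.-1.

Definition Eblk (i a b : nat) : C :=
  if (t i - t i.+1 <= b)%N then mxn (Ehat i) a (b - (t i - t i.+1)) else 0.

Definition pencil : 'M[{poly C}]_(nrows, ncols) :=
  \matrix_(p < nrows, q < ncols)
    \sum_(i < k.-1)
      (if (roff i <= p < roff i.+1)%N then
         (if (coff i <= q < coff i.+1)%N
          then (Eblk i (p - roff i) (q - coff i))%:P * 'X else 0)
       + (if (coff i.+1 <= q < coff i.+2)%N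
          then (mxn (A i) (p - roff i) (q - coff i.+1))%:P else 0)
       else 0).

Definition Zblk (i : nat) : 'M[C]_(t i.+1, t i) :=
  \matrix_(a < t i.+1, b < t i)
    (if (t i - t i.+1 <= b)%N
     then mxn (- (invmx (A i) *m Ehat i)) a (b - (t i - t i.+1)) else 0).

Fixpoint Zprod (i : nat) : 'M[C]_(t i, t 0) :=
  match i as i0 return 'M[C]_(t i0, t 0) with
  | 0 => 1%:M
  | i'.+1 => Zblk i' *m Zprod i'
  end.

Definition Nmat : 'M[{poly C}]_(ncols, t 0) :=
  \matrix_(q < ncols, c < t 0)
    \sum_(j < k)
      (if (coff j <= q < coff j.+1)%N
       then (mxn (Zprod j) (q - coff j) c)%:P * 'X^j else 0).

End Pencil.

From HB Require Import structures.
From mathcomp Require Import all_boot all_order all_algebra.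
From mathcomp Require Import complex.
From mathcomp Require Import reals.
From mathcomp Require Import zify fingroup perm.
Set Implicit Arguments. Unset Strict Implicit. Unset Printing Implicit Defensive.
Import Order.TTheory GRing.Theory Num.Theory.
Local Open Scope ring_scope.

(* Split a null vector x of the pencil into its column blocks x_0, ..., x_(k-1).
   Block row i reads lambda E_i x_i + A_i x_(i+1) = 0 and, A_i being invertible,
   says x_(i+1) = lambda Z_i x_i; hence x = N(lambda) x_0, so the columns of N
   span the null space, and they are independent because the top block of N is
   the identity.  For minimality, each product Z_(j-1)...Z_0 has the staircase
   shape [0 U] with U upper triangular with nonzero diagonal.  A polynomial
   basis B is then N C, where C is the top block of B, a polynomial matrix with
   det C <> 0; so some permutation sigma has C(c, sigma c) <> 0 for all c.  If
   block j of column c of N is nonzero, the staircase shape forces block j of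
   column sigma c of B to be nonzero too, hence deg B_(sigma c) >= deg N_c. *)

Lemma mxnE (T : zmodType) m n (M : 'M[T]_(m, n)) (i : 'I_m) (j : 'I_n) :
  mxn M i j = M i j.
Proof. by rewrite /mxn !valK. Qed.

Lemma mxn_out (T : zmodType) m n (M : 'M[T]_(m, n)) a b :
  ~~ ((a < m) && (b < n))%N -> mxn M a b = 0.
Proof.
rewrite /mxn; case: (ltnP a m) => ha /=; last by rewrite insubN // -ltnNge.
by move=> hb; rewrite (insubT (fun x => x < m)%N ha) insubN.
Qed.

Lemma mxn_map (T S : zmodType) (f : {additive T -> S}) m n (M : 'M[T]_(m, n)) a b :
  mxn (map_mx f M) a b = f (mxn M a b).
Proof.
have [/andP[ha hb]|h] := boolP ((a < m) && (b < n))%N; last by rewrite !mxn_out ?raddf0.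
by rewrite -[a]/(val (Ordinal ha)) -[b]/(val (Ordinal hb)) !mxnE mxE.
Qed.

Lemma mxn_opp (T : zmodType) m n (M : 'M[T]_(m, n)) a b : mxn (- M) a b = - mxn M a b.
Proof.
have [/andP[ha hb]|h] := boolP ((a < m) && (b < n))%N; last by rewrite !mxn_out ?oppr0.
by rewrite -[a]/(val (Ordinal ha)) -[b]/(val (Ordinal hb)) !mxnE mxE.
Qed.

Lemma mxn_mul (T : pzRingType) m n p (M : 'M[T]_(m, n)) (N : 'M[T]_(n, p)) a c :
  mxn (M *m N) a c = \sum_(b < n) mxn M a b * mxn N b c.
Proof.
have [/andP[ha hc]|h] := boolP ((a < m) && (c < p))%N; last first.
  rewrite mxn_out // big1 // => b _; move: h; rewrite negb_and => /orP[ha|hc].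
    by rewrite mxn_out ?mul0r // negb_and ha.
  by rewrite [mxn N _ _]mxn_out ?mulr0 // negb_and hc orbT.
rewrite -[a]/(val (Ordinal ha)) -[c]/(val (Ordinal hc)) mxnE mxE.
by apply: eq_bigr => b _; rewrite !mxnE.
Qed.

Section Offsets.
Variable s : nat -> nat.

Lemma coffS j : coff s j.+1 = (coff s j + s j)%N.
Proof. by rewrite /coff big_ord_recr. Qed.

Lemma leq_coff i j : (i <= j)%N -> (coff s i <= coff s j)%N.
Proof.
move=> /subnK <-; elim: (j - i)%N => //= d IH.
by rewrite addSn coffS; apply: leq_trans IH (leq_addr _ _).
Qed.

Lemma coff_ltn k j b : (j < k)%N -> (b < s j)%N -> (coff s j + b < coff s k)%N.
Proof.
by move=> hj hb; apply: leq_trans (leq_coff hj); rewrite coffS ltn_add2l.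
Qed.

Lemma coffP k q : (q < coff s k)%N ->
  exists j b, [/\ (j < k)%N, (b < s j)%N & q = (coff s j + b)%N].
Proof.
elim: k => [|k IH]; first by rewrite /coff big_ord0.
rewrite coffS => hq; have [lt_q|le_q] := ltnP q (coff s k).
  by have [j [b [hj hb ->]]] := IH lt_q; exists j, b; split; rewrite // ltnW.
by exists k, (q - coff s k)%N; split; rewrite ?subnKC //; lia.
Qed.

Lemma coff_block i j b :
  (b < s j)%N -> (coff s i <= coff s j + b < coff s i.+1)%N = (i == j).
Proof.
move=> hb; case: (ltngtP i j) => [lt_ij|lt_ji|->]; last by rewrite coffS; lia.
  by have := leq_coff lt_ij; lia.
by have := leq_coff lt_ji; rewrite coffS; lia.
Qed.

Lemma big_coff (R : nmodType) k (F : nat -> R) :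
  \sum_(q < coff s k) F q = \sum_(j < k) \sum_(b < s j) F (coff s j + b)%N.
Proof.
elim: k => [|k IH]; first by rewrite /coff !big_ord0.
by rewrite big_ord_recr -IH /= coffS big_split_ord.
Qed.

End Offsets.

(* Blocks for the partition of the indices into consecutive runs of lengths
   s 0, s 1, ...; indices beyond the matrix read as 0. *)
Definition rblk (R : zmodType) (s : nat -> nat) (j : nat) m d (X : 'M[R]_(m, d)) :
  'M[R]_(s j, d) := \matrix_(b, c) mxn X (coff s j + b) c.

Definition cblk (R : zmodType) (s : nat -> nat) (j : nat) m d (Y : 'M[R]_(m, d)) :
  'M[R]_(m, s j) := \matrix_(a, b) mxn Y a (coff s j + b).

Section BlockMatrices.
Variable s : nat -> nat.

Lemma mxn_rblk (R : zmodType) j m d (X : 'M[R]_(m, d)) (b : 'I_(s j)) c :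
  mxn (rblk s j X) b c = mxn X (coff s j + b) c.
Proof.
have [hc|hc] := ltnP c d; last by rewrite !mxn_out // [(c < d)%N]ltnNge hc andbF.
by rewrite -[c]/(val (Ordinal hc)) mxnE mxE.
Qed.

Lemma rblkE (R : zmodType) j m d (X : 'M[R]_(m, d)) (b : 'I_(s j)) c (q : 'I_m) :
  q = (coff s j + b)%N :> nat -> rblk s j X b c = X q c.
Proof. by move=> eq_q; rewrite mxE -eq_q mxnE. Qed.

Lemma rblk0 (R : zmodType) j m d : rblk s j (0 : 'M[R]_(m, d)) = 0.
Proof.
by apply/matrixP => b c; rewrite !mxE /mxn; do 2!case: insub => [?|] //; rewrite mxE.
Qed.

Lemma rblk_map (R S : zmodType) (f : {additive R -> S}) j m d (X : 'M[R]_(m, d)) :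
  rblk s j (map_mx f X) = map_mx f (rblk s j X).
Proof. by apply/matrixP => b c; rewrite !mxE mxn_map. Qed.

Lemma cblk_map (R S : zmodType) (f : {additive R -> S}) j m d (Y : 'M[R]_(m, d)) :
  cblk s j (map_mx f Y) = map_mx f (cblk s j Y).
Proof. by apply/matrixP => a b; rewrite !mxE mxn_map. Qed.

Lemma rblk_mul (R : pzRingType) j m p d (Y : 'M[R]_(m, p)) (X : 'M[R]_(p, d)) :
  rblk s j (Y *m X) = rblk s j Y *m X.
Proof.
apply/matrixP => b c; rewrite !mxE mxn_mul.
by apply: eq_bigr => e _; rewrite mxE !mxnE.
Qed.

Lemma mulmx_blk (R : pzRingType) k m d
    (Y : 'M[R]_(m, coff s k)) (X : 'M[R]_(coff s k, d)) :
  Y *m X = \sum_(j < k) cblk s j Y *m rblk s j X.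
Proof.
apply/matrixP => a c; rewrite mxE summxE.
under eq_bigr do rewrite -!mxnE.
rewrite (big_coff s k (fun q => mxn Y a q * mxn X q c)).
by apply: eq_bigr => j _; rewrite mxE; apply: eq_bigr => b _; rewrite !mxE.
Qed.

Lemma rblk_inj (R : zmodType) k d (X Y : 'M[R]_(coff s k, d)) :
  (forall j, (j < k)%N -> rblk s j X = rblk s j Y) -> X = Y.
Proof.
move=> eqXY; apply/matrixP => q c.
have [j [b [hj hb eq_q]]] := coffP (ltn_ord q).
by rewrite -!(rblkE (b := Ordinal hb) _ _ eq_q) eqXY.
Qed.

End BlockMatrices.

(* [staircase s M] says M = [0 U] with s zero columns followed by a square
   upper triangular U with nonzero diagonal. *)
Definition staircase (R : zmodType) m p (s : nat) (M : 'M[R]_(m, p)) : Prop :=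
  [/\ (s + m)%N = p,
      forall (b : 'I_m) (c : 'I_p), (c < s + b)%N -> M b c = 0 &
      forall (b : 'I_m) (c : 'I_p), c = (s + b)%N :> nat -> M b c != 0].

Lemma staircase1 (R : nzRingType) m : staircase 0 (1%:M : 'M[R]_m).
Proof.
split=> // b c; rewrite mxE add0n => hbc.
  by rewrite -val_eqE /= gtn_eqF.
by rewrite (_ : c = b) ?eqxx ?oner_eq0 //; apply: val_inj.
Qed.

Lemma staircaseN (R : zmodType) m p s (M : 'M[R]_(m, p)) :
  staircase s M -> staircase s (- M).
Proof.
by case=> dim lo piv; split=> // b c hbc; rewrite mxE ?oppr_eq0 ?(lo _ _ hbc) ?oppr0 ?piv.
Qed.

Lemma staircase_map (R S : zmodType) (f : {additive R -> S}) m p s (M : 'M[R]_(m, p)) :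
  injective f -> staircase s M -> staircase s (map_mx f M).
Proof.
move=> f_inj [dim lo piv]; split=> // b c hbc; rewrite mxE.
  by rewrite lo ?raddf0.
by rewrite -(raddf0 f) (inj_eq f_inj) piv.
Qed.

Lemma staircase_mul (R : idomainType) m1 m2 p s1 s2
    (Z : 'M[R]_(m2, m1)) (Y : 'M[R]_(m1, p)) :
  staircase s1 Z -> staircase s2 Y -> staircase (s1 + s2) (Z *m Y).
Proof.
move=> [dimZ loZ pivZ] [dimY loY pivY]; split; first by lia.
  move=> b c hbc; rewrite mxE big1 // => e _.
  have [lt_e|le_e] := ltnP e (s1 + b); first by rewrite loZ ?mul0r.
  by rewrite loY ?mulr0 //; lia.
move=> b c hbc; have he : (s1 + b < m1)%N by have := ltn_ord b; lia.
rewrite mxE (bigD1 (Ordinal he)) //= big1 ?addr0.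
  by rewrite mulf_neq0 ?pivZ ?pivY //=; lia.
move=> e /eqP ne; have [lt_e|le_e] := ltnP e (s1 + b); first by rewrite loZ ?mul0r.
rewrite loY ?mulr0 //; suff : (s1 + b < e)%N by lia.
by rewrite ltn_neqAle le_e andbT; apply/eqP => eq_e; apply: ne; apply: val_inj.
Qed.

Lemma staircase_mulKl (R : idomainType) m p s (U : 'M[R]_m) (M : 'M[R]_(m, p)) :
  staircase 0 U -> staircase s (U *m M) -> staircase s M.
Proof.
move=> [_ loU pivU] [dim loUM pivUM].
have diag_mul (b : 'I_m) c : (forall e : 'I_m, (b < e)%N -> M e c = 0) ->
    (U *m M) b c = U b b * M b c.
  move=> lo_b; rewrite mxE (bigD1 b) //= big1 ?addr0 // => e /eqP ne.
  have [lt_e|lt_b|eq_e] := ltngtP e b; first by rewrite loU ?mul0r.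
    by rewrite lo_b ?mulr0.
  by case: ne; apply: val_inj.
have lo r (b : 'I_m) (c : 'I_p) : (m - b <= r)%N -> (c < s + b)%N -> M b c = 0.
  elim: r b => [|r IH] b hr hc; first by have := ltn_ord b; lia.
  have := loUM b c hc; rewrite diag_mul => [/eqP|e lt_be]; last by apply: IH; lia.
  by rewrite mulf_eq0 (negbTE (pivU _ _ (erefl _))) => /eqP.
split=> // [b c|b c hbc]; first exact: lo.
have := pivUM b c hbc; rewrite diag_mul => [|e lt_be]; last by apply: (lo m); lia.
by rewrite mulf_eq0 negb_or => /andP[].
Qed.

Lemma uppertri_staircase (F : fieldType) m (U : 'M[F]_m) :
  upper_triangular U -> U \in unitmx -> staircase 0 U.
Proof.
move=> triU; rewrite unitmxE unitfE -det_tr det_trig; last first.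
  by apply/is_trig_mxP => b c lt_bc; rewrite mxE triU.
move=> /prodf_neq0 diagU; split=> [//|b c|b c /val_inj ->]; first exact: triU.
by have := diagU b isT; rewrite mxE.
Qed.

Lemma staircase_mulmx_neq0 (R : idomainType) m p d s (M : 'M[R]_(m, p))
    (X : 'M[R]_(p, d)) (c : 'I_p) (j : 'I_d) :
  staircase s M -> (s <= c)%N -> X c j != 0 -> exists b, (M *m X) b j != 0.
Proof.
move=> [dim lo piv] le_sc Xcj.
have [cs Xcsj max_cs] := @arg_maxnP _ c (fun e => X e j != 0) val Xcj.
have le_ccs : (c <= cs)%N by exact: max_cs.
have hb : (cs - s < m)%N by have := ltn_ord cs; lia.
(* the row whose pivot meets the last nonzero entry of column j of X *)
exists (Ordinal hb); rewrite mxE (bigD1 cs) //= big1 ?addr0.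
  by rewrite mulf_neq0 // piv //=; lia.
move=> e /eqP ne; have [lt_e|lt_cs|eq_e] := ltngtP e cs.
- by rewrite lo ?mul0r //=; lia.
- have [/eqP ->|/max_cs le_ecs] := boolP (X e j == 0); first by rewrite mulr0.
  by have := leq_trans lt_cs le_ecs; rewrite ltnn.
- by case: ne; apply: val_inj.
Qed.

Lemma det_neq0_perm (R : comPzRingType) n (M : 'M[R]_n) :
  \det M != 0 -> exists s : 'S_n, forall i, M i (s i) != 0.
Proof.
case: (pickP [pred s : 'S_n | [forall i, M i (s i) != 0]]) => [s /forallP|none].
  by exists s.
rewrite /determinant big1 ?eqxx // => s _.
have /forallPn[a] := negbT (none s); rewrite negbK => /eqP Msa0.
by rewrite (bigD1 a) //= Msa0 mul0r mulr0.
Qed.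

Lemma nullity_leq_rank_span (F : fieldType) m n d
    (P : 'M[F]_(m, n)) (X : 'M[F]_(n, d)) :
  (forall x : 'cV[F]_n, P *m x = 0 -> exists c : 'cV[F]_d, x = X *m c) ->
  (n - \rank P <= \rank X)%N.
Proof.
move=> span; rewrite -mxrank_tr -(mxrank_tr X) -mxrank_ker; apply: mxrankS.
apply/row_subP => i.
have /span[c eq_c] : P *m (row i (kermx P^T))^T = 0.
  by apply: trmx_inj; rewrite trmx_mul trmxK -row_mul mulmx_ker row0 trmx0.
by rewrite -[row i _]trmxK eq_c trmx_mul submxMl.
Qed.

Lemma toF_inj (R : idomainType) m d : injective (@toF R m d).
Proof.
move=> X Y /matrixP eqXY; apply/matrixP => i j.
by have := eqXY i j; rewrite !mxE => /eqP; rewrite tofrac_eq => /eqP.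
Qed.

Section Pencil.
Variables (C : fieldType) (k : nat) (t : nat -> nat).
Variables (A Ehat : forall i : nat, 'M[C]_(t i.+1)).

Local Notation ts := (fun i => t i.+1).
Local Notation P := (pencil k A Ehat).
Local Notation N := (Nmat k A Ehat).
Local Notation n := (ncols k t).
Local Notation K := {fraction {poly C}}.
Local Notation lam := (tofrac 'X : K).
Local Notation cK := (map_mx (@tofrac _ \o @polyC C)).

Definition Emat i : 'M[C]_(t i.+1, t i) := \matrix_(a, b) Eblk Ehat i a b.

Lemma pencil_blk_entry i j (a : 'I_(t i.+1)) b :
  (i < k.-1)%N -> (j < k)%N -> (b < t j)%N ->
  mxn P (roff t i + a) (coff t j + b) =
    (if j == i then (Eblk Ehat i a b)%:P * 'X else 0)
  + (if j == i.+1 then (mxn (A i) a b)%:P else 0).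
Proof.
move=> hi hj hb; have ha := ltn_ord a.
rewrite (_ : mxn P _ _ =
  P (Ordinal (coff_ltn (s := ts) hi ha)) (Ordinal (coff_ltn hj hb))); last by rewrite -mxnE.
rewrite mxE (bigD1 (Ordinal hi)) //= big1 ?addr0 => [|i' /eqP ne]; last first.
  by rewrite (coff_block (s := ts)) //; case: eqP => // eq_i; case: ne; apply: val_inj.
rewrite (coff_block (s := ts)) // eqxx !(coff_block (s := t)) // ![_ == j]eq_sym.
have -> : (coff ts i + a - roff t i = a)%N := addKn _ _.
have [->|_] := eqVneq j i; first by rewrite addKn (ltn_eqF (ltnSn i)).
by case: eqP => [->|]; rewrite ?addKn.
Qed.

Lemma pencil_blk_diag i :
  (i < k.-1)%N -> cblk t i (rblk ts i P) = 'X *: map_mx polyC (Emat i).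
Proof.
move=> hi; apply/matrixP => a b; rewrite !mxE mxn_rblk pencil_blk_entry ?eqxx //; try lia.
by rewrite (ltn_eqF (ltnSn i)) addr0 mulrC.
Qed.

Lemma pencil_blk_super i :
  (i < k.-1)%N -> cblk t i.+1 (rblk ts i P) = map_mx polyC (A i).
Proof.
move=> hi; apply/matrixP => a b; rewrite !mxE mxn_rblk pencil_blk_entry ?eqxx //; try lia.
by rewrite (gtn_eqF (ltnSn i)) add0r mxnE.
Qed.

Lemma pencil_blk0 i j : (i < k.-1)%N -> (j < k)%N -> j != i -> j != i.+1 ->
  cblk t j (rblk ts i P) = 0.
Proof.
move=> hi hj ne1 ne2; apply/matrixP => a b.
by rewrite !mxE mxn_rblk pencil_blk_entry // (negbTE ne1) (negbTE ne2) addr0.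
Qed.

Lemma rblk_pencil_mul d (X : 'M[K]_(n, d)) i : (i < k.-1)%N ->
  rblk ts i (toF P *m X) = lam *: (cK (Emat i) *m rblk t i X) + cK (A i) *m rblk t i.+1 X.
Proof.
move=> hi; have hi0 : (i < k)%N by lia.
have hi1 : (i.+1 < k)%N by lia.
rewrite rblk_mul (mulmx_blk (s := t) (k := k)).
rewrite (bigD1 (Ordinal hi0)) // (bigD1 (Ordinal hi1)) /=; last by rewrite -val_eqE /= gtn_eqF.
rewrite big1 ?addr0 => [|j /andP[ne1 ne2]].
  rewrite /toF !(rblk_map, cblk_map) pencil_blk_diag ?pencil_blk_super //.
  by rewrite map_mxZ -!map_mx_comp scalemxAl.
rewrite /toF !(rblk_map, cblk_map) pencil_blk0 ?map_mx0 ?mul0mx //.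
Qed.

Lemma Zblk_E i : Zblk A Ehat i = - (invmx (A i) *m Emat i).
Proof.
apply/matrixP => a b; rewrite !mxE.
under [X in _ = - X]eq_bigr do rewrite mxE /Eblk.
case: ifP => hb.
  by rewrite mxn_opp mxn_mul; congr (- _); apply: eq_bigr => e _; rewrite mxnE.
by rewrite big1 ?oppr0 // => e _; rewrite mulr0.
Qed.

Lemma rblk_Nmat j : (j < k)%N -> rblk t j N = 'X^j *: map_mx polyC (Zprod A Ehat j).
Proof.
move=> hj; apply/matrixP => b c; rewrite !mxE.
rewrite (_ : mxn N _ _ = N (Ordinal (coff_ltn hj (ltn_ord b))) c); last by rewrite -mxnE.
rewrite mxE (bigD1 (Ordinal hj)) //= big1 ?addr0 => [|j' /eqP ne]; last first.
  by rewrite coff_block //; case: eqP => // eq_j; case: ne; apply: val_inj.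
by rewrite coff_block // eqxx addKn mxnE mulrC.
Qed.

Lemma rblk_toF_Nmat j : (j < k)%N -> rblk t j (toF N) = lam ^+ j *: cK (Zprod A Ehat j).
Proof. by move=> hj; rewrite /toF rblk_map rblk_Nmat // map_mxZ rmorphXn -map_mx_comp. Qed.

Hypothesis k_gt0 : (0 < k)%N.
Hypothesis t_decr : forall i, (i < k.-1)%N -> (t i.+1 <= t i)%N.
Hypothesis A_Ehat_uppertri : forall i, (i < k.-1)%N ->
  [/\ A i \in unitmx, Ehat i \in unitmx,
      upper_triangular (A i) & upper_triangular (Ehat i)].

Lemma mul_A_Zblk i : (i < k.-1)%N -> A i *m Zblk A Ehat i = - Emat i.
Proof.
by case/A_Ehat_uppertri => unitA _ _ _; rewrite Zblk_E mulmxN mulKVmx.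
Qed.

Lemma pencil_mul_Nmat : toF P *m toF N = 0.
Proof.
apply: (rblk_inj (s := ts) (k := k.-1)) => i hi; rewrite rblk0 rblk_pencil_mul //.
rewrite !rblk_toF_Nmat; try lia.
rewrite /= map_mxM -!scalemxAr !scalerA -exprS mulmxA.
rewrite -scalerDr -mulmxDl -map_mxM mul_A_Zblk //.
by rewrite map_mxN addrN mul0mx scaler0.
Qed.

Lemma pencil_kernel d (X : 'M[K]_(n, d)) : toF P *m X = 0 -> X = toF N *m rblk t 0 X.
Proof.
move=> PX0.
have rblk_succ i :
    (i < k.-1)%N -> rblk t i.+1 X = lam *: (cK (Zblk A Ehat i) *m rblk t i X).
  move=> hi; have [unitA _ _ _] := A_Ehat_uppertri hi.
  have /eqP := rblk_pencil_mul X hi; rewrite PX0 rblk0 eq_sym addrC addr_eq0 => /eqP eqA.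
  rewrite -[rblk t i.+1 X](mulKmx (_ : cK (A i) \in unitmx)) ?map_unitmx // eqA.
  rewrite Zblk_E map_mxN map_mxM map_invmx.
  by rewrite mulmxN -scalemxAr mulNmx scalerN mulmxA.
have rblk_top j :
    (j < k)%N -> rblk t j X = lam ^+ j *: (cK (Zprod A Ehat j) *m rblk t 0 X).
  elim: j => [|j IH] hj; first by rewrite map_mx1 mul1mx scale1r.
  rewrite rblk_succ ?IH; try lia.
  by rewrite -scalemxAr scalerA -exprS /= map_mxM mulmxA.
apply: (rblk_inj (s := t) (k := k)) => j hj.
by rewrite rblk_mul rblk_toF_Nmat // (rblk_top j hj) scalemxAl.
Qed.

Lemma rank_Nmat : \rank (toF N) = t 0.
Proof.
apply/eqP; rewrite eqn_leq rank_leq_col -{1}(mxrank1 K (t 0)).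
have <- : rblk t 0 1%:M *m toF N = 1%:M.
  by rewrite -rblk_mul mul1mx rblk_toF_Nmat // scale1r map_mx1.
exact: mxrankM_maxr.
Qed.

Lemma nullity_pencil : (n - normal_rank P = t 0)%N.
Proof.
apply/eqP; rewrite eqn_leq; apply/andP; split.
  rewrite -rank_Nmat; apply: nullity_leq_rank_span => x /pencil_kernel ->.
  by exists (rblk t 0 x).
by have := mulmx0_rank_max pencil_mul_Nmat; rewrite rank_Nmat /normal_rank; lia.
Qed.

Lemma Nmat_basis : poly_rnull_basis P N.
Proof.
split; [exact: pencil_mul_Nmat | exact: rank_Nmat | move=> x /pencil_kernel ->].
by exists (rblk t 0 x).
Qed.

Lemma staircase_Zblk i : (i < k.-1)%N -> staircase (t i - t i.+1) (Zblk A Ehat i).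
Proof.
move=> hi; have [unitA unitE triA triE] := A_Ehat_uppertri hi.
have [_ loU pivU] : staircase 0 (- (invmx (A i) *m Ehat i)).
  apply/staircaseN/(staircase_mulKl (uppertri_staircase triA unitA)).
  by rewrite mulKVmx //; exact: uppertri_staircase.
have le_t := t_decr hi.
split=> [|b c hc|b c hc]; first by lia.
  rewrite mxE; case: leqP => // le_c.
  have hc' : (c - (t i - t i.+1) < t i.+1)%N by have := ltn_ord c; lia.
  by rewrite -[(c - _)%N]/(val (Ordinal hc')) mxnE loU //=; lia.
have hc' : (c - (t i - t i.+1) < t i.+1)%N by have := ltn_ord c; lia.
rewrite mxE ifT; last by lia.
by rewrite -[(c - _)%N]/(val (Ordinal hc')) mxnE pivU //=; lia.
Qed.

Lemma staircase_Zprod j : (j < k)%N -> staircase (t 0 - t j) (Zprod A Ehat j).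
Proof.
elim: j => [|j IH] hj; first by rewrite subnn; exact: staircase1.
have hj' : (j < k.-1)%N by lia.
have [dim_j _ _] := IH (ltnW hj); have le_t := t_decr hj'.
rewrite (_ : (t 0 - t j.+1 = (t j - t j.+1) + (t 0 - t j))%N); last by lia.
exact: staircase_mul (staircase_Zblk hj') (IH (ltnW hj)).
Qed.

Lemma coldeg_Nmat_le d (Cm : 'M[{poly C}]_(t 0, d)) (c : 'I_(t 0)) (j : 'I_d) :
  Cm c j != 0 ->
  (\max_(q < n) (size (N q c)).-1 <= \max_(q < n) (size ((N *m Cm) q j)).-1)%N.
Proof.
move=> Cm_cj; apply/bigmax_leqP => q _.
have [m [b [hm hb eq_q]]] := coffP (ltn_ord q).
have Nq : N q c = (Zprod A Ehat m (Ordinal hb) c)%:P * 'X^m.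
  by rewrite -(rblkE (s := t) (b := Ordinal hb) _ _ eq_q) rblk_Nmat // !mxE mulrC.
rewrite Nq; have [->|Z_bc] := eqVneq (Zprod A Ehat m (Ordinal hb) c) 0.
  by rewrite mul0r size_poly0.
have [_ loZ _] := staircase_Zprod hm.
have le_c : (t 0 - t m <= c)%N.
  by rewrite leqNgt; apply: contra Z_bc => lt_c; rewrite loZ //; lia.
have stairZ := staircase_map (f := polyC) (@polyC_inj C) (staircase_Zprod hm).
have [b' NCm_b'j] := staircase_mulmx_neq0 stairZ le_c Cm_cj.
pose q' := Ordinal (coff_ltn hm (ltn_ord b')).
apply: leq_trans (leq_bigmax q').
rewrite -(rblkE (s := t) (b := b') (q := q') _ _ erefl) rblk_mul rblk_Nmat //.
rewrite -scalemxAl mxE.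
rewrite [in X in (_ <= X)%N]mulrC !size_mulXn ?polyC_eq0 // size_polyC Z_bc.
rewrite addn1 /=; move: NCm_b'j; rewrite -size_poly_eq0.
by case: (size _) => // s _; rewrite addnS leq_addr.
Qed.

Lemma Nmat_minimal d (B : 'M[{poly C}]_(n, d)) :
  poly_rnull_basis P B -> (coldeg_sum N <= coldeg_sum B)%N.
Proof.
move=> [PB0 rankB spanB].
have [Cm eqB] : exists Cm : 'M_(t 0, d), B = N *m Cm.
  exists (rblk t 0 B); apply: toF_inj.
  by rewrite {1}(pencil_kernel PB0) /toF !map_mxM rblk_map.
have eq_d : d = t 0.
  apply/eqP; rewrite eqn_leq -rankB; apply/andP; split.
    by rewrite eqB /toF map_mxM (leq_trans (mxrankM_maxr _ _) (rank_leq_row _)).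
  by rewrite -{1}nullity_pencil; exact: nullity_leq_rank_span spanB.
subst d; have unitCm : toF Cm \in unitmx.
  rewrite -row_full_unit /row_full eqn_leq rank_leq_col -{1}rankB eqB /toF.
  by rewrite map_mxM mxrankM_maxr.
move: unitCm; rewrite unitmxE unitfE det_map_mx tofrac_eq0 => /det_neq0_perm[s Cm_s].
rewrite /coldeg_sum [X in (_ <= X)%N](reindex_inj (@perm_inj _ s)) eqB.
by apply: leq_sum => c _; exact: coldeg_Nmat_le.
Qed.

End Pencil.

Theorem theorem5p8 (R : realType) (k : nat) (t : nat -> nat)
  (A Ehat : forall i : nat, 'M[complex R]_(t i.+1)) :
  (2 <= k)%N ->
  (forall i, (i < k.-1)%N -> (t i.+1 <= t i)%N) ->
  (forall i, (i < k.-1)%N ->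
     [/\ A i \in unitmx, Ehat i \in unitmx,
         upper_triangular (A i) & upper_triangular (Ehat i)]) ->
  (ncols k t - normal_rank (pencil k A Ehat) = t 0)%N /\
  min_poly_basis (pencil k A Ehat) (Nmat k A Ehat).
Proof.
move=> k_ge2 t_decr A_Ehat_uppertri; have k_gt0 : (0 < k)%N by apply: leq_trans k_ge2.
split; first exact: nullity_pencil.
split; first exact: Nmat_basis.
by move=> d B; exact: Nmat_minimal.
Qed.
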